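(* The category $\mathbf{AlgLPries}$ of algebraic L-spaces and coherent L-morphisms is a full subcategory of the category $\mathbf{ConLPries}$ of continuous L-spaces and proper L-morphisms.
   Context: A Priestley space is a Stone space $X$ with a partial order such that clopen upsets separate points. An L-space is a Priestley space in which the downset of each clopen set is clopen and the closure of each open upset is open. ${\sf ClopUp}(X)$ is the set of clopen upsets; $\mathrm{cl}$ denotes closure. An L-morphism is a continuous order-preserving map $f:X\to X'$ between L-spaces with $f^{-1}(\mathrm{cl}\,U)=\mathrm{cl}\,f^{-1}(U)$ for every open upset $U$ of $X'$. The spatial part of $X$ is $Y=\{y\in X\mid{\downarrow}y\text{ clopen}\}$. A Scott upset is a closed upset $F$ with $\min F\subseteq Y$; ${\sf ClopSUp}(X)$ is the set of clopen Scott upsets. For $U,V\in{\sf ClopUp}(X)$, $V\ll U$ means that for every open upset $W$, $U\subseteq\mathrm{cl}\,W$ implies $V\subseteq W$; $\ker U=\bigcup\{V\in{\sf ClopUp}(X)\mid V\ll U\}$; $\mathrm{core}\,U=\bigcup\{V\in{\sf ClopSUp}(X)\mid V\subseteq U\}$. $X$ is a continuous L-space if $\ker U$ is dense in $U$ for each $U\in{\sf ClopUp}(X)$, and an algebraic L-space if $\mathrm{core}\,U$ is dense in $U$ for each $U\in{\sf ClopUp}(X)$. An L-morphism $f:X_1\to X_2$ is proper if $f^{-1}(\ker U)\subseteq\ker f^{-1}(U)$, and coherent if $f^{-1}(\mathrm{core}\,U)\subseteq\mathrm{core}\,f^{-1}(U)$, for all $U\in{\sf ClopUp}(X_2)$.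 *)

From mathcomp Require Import all_boot all_order.
From mathcomp Require Import all_classical all_reals all_analysis.
Set Implicit Arguments. Unset Strict Implicit. Unset Printing Implicit Defensive.
Local Open Scope classical_set_scope.

Section LSpaces.
Context {X : topologicalType} (le : X -> X -> Prop).

Definition is_partial_order :=
  [/\ forall x, le x x,
      forall x y z, le x y -> le y z -> le x z &
      forall x y, le x y -> le y x -> x = y].

Definition upset (A : set X) := forall x y, A x -> le x y -> A y.

Definition downset_of (A : set X) : set X := [set y | exists2 x, A x & le y x].

Definition stone_space :=
  [/\ compact [set: X], hausdorff_space X & zero_dimensional X].

Definition priestley :=
  [/\ stone_space, is_partial_order &
      forall x y, ~ le x y -> exists U, [/\ clopen U, upset U, U x & ~ U y]].

Definition L_space :=
  [/\ priestley,
      forall A, clopen A -> clopen (downset_of A) &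
      forall U, open U -> upset U -> open (closure U)].

Definition clop_up (U : set X) := clopen U /\ upset U.

Definition spatial : set X := [set y | clopen (downset_of [set y])].

Definition minimals (F : set X) : set X :=
  [set x | F x /\ forall z, F z -> le z x -> z = x].

Definition scott_upset (F : set X) :=
  [/\ closed F, upset F & minimals F `<=` spatial].

Definition clop_scott_up (U : set X) := clopen U /\ scott_upset U.

Definition way_below (V U : set X) :=
  forall W, open W -> upset W -> U `<=` closure W -> V `<=` W.

Definition ker (U : set X) : set X :=
  \bigcup_(V in [set V | clop_up V /\ way_below V U]) V.

Definition core (U : set X) : set X :=
  \bigcup_(V in [set V | clop_scott_up V /\ V `<=` U]) V.

(* "A is dense in U" : U is contained in the closure of A *)
Definition continuous_L_space :=
  L_space /\ forall U, clop_up U -> U `<=` closure (ker U).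

Definition algebraic_L_space :=
  L_space /\ forall U, clop_up U -> U `<=` closure (core U).

End LSpaces.

Section Morphisms.
Context {X1 X2 : topologicalType} (le1 : X1 -> X1 -> Prop) (le2 : X2 -> X2 -> Prop).

Definition L_morphism (f : X1 -> X2) :=
  [/\ continuous f,
      forall x y, le1 x y -> le2 (f x) (f y) &
      forall U : set X2, open U -> upset le2 U ->
        f @^-1` (closure U) = closure (f @^-1` U)].

Definition proper_L_morphism (f : X1 -> X2) :=
  L_morphism f /\
  forall U, clop_up le2 U -> f @^-1` (ker le2 U) `<=` ker le1 (f @^-1` U).

Definition coherent_L_morphism (f : X1 -> X2) :=
  L_morphism f /\
  forall U, clop_up le2 U -> f @^-1` (core le2 U) `<=` core le1 (f @^-1` U).

End Morphisms.

(* Compactness and Zorn's lemma put a minimal point of a closed set below each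
   of its points.  Hence a clopen Scott upset V contained in U is way below U:
   a point x of V lies above a minimal m of V, the downset of m is an open
   neighbourhood of m, so if U is inside the closure of an open upset W this
   neighbourhood meets W, and x is in W.  Thus core U is contained in ker U.
   Conversely core U is an open upset, and in an algebraic L-space U lies in
   its closure, so everything way below U lies in core U.  Hence ker = core on
   the clopen upsets of an algebraic L-space, which makes the space continuous
   and the properness and coherence conditions on a morphism identical. *)

From mathcomp Require Import all_boot all_order.
From mathcomp Require Import all_classical all_reals all_analysis.
Local Open Scope classical_set_scope.

Section Priestley.
Context {X : topologicalType} (le : X -> X -> Prop).
Hypothesis pri : priestley le.

Let le_refl x : le x x. Proof. by case: pri => _ [+ _ _]. Qed.

Let le_trans x y z : le x y -> le y z -> le x z.
Proof. by case: pri => _ [_ + _] _; apply. Qed.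

Let le_anti x y : le x y -> le y x -> x = y.
Proof. by case: pri => _ [_ _ +] _; apply. Qed.

Let compactT : compact [set: X]. Proof. by case: pri => [[]]. Qed.

Let separation x y : ~ le x y -> exists U, [/\ clopen U, upset le U, U x & ~ U y].
Proof. by case: pri => _ _; apply. Qed.

Lemma closed_downset1 a : closed (downset_of le [set a]).
Proof.
rewrite -openC openE => y ya.
have nya : ~ le y a by move=> ?; apply: ya; exists a.
have [U [[oU _] uU Uy nUa]] := separation _ _ nya.
apply: filterS (open_nbhs_nbhs (conj oU Uy)) => z Uz [_ -> za].
exact/nUa/(uU _ _ Uz za).
Qed.

Lemma chain_lower_bound (C A : set X) :
  closed C -> A !=set0 -> A `<=` C -> total_on A le ->
  exists2 p, C p & forall a, A a -> le p a.
Proof.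
move=> Ccl [a0 Aa0] AC Atot.
pose B a := C `&` downset_of le [set a].
have closedB a : closed (B a) by apply: closedI => //; exact: closed_downset1.
pose F := filter_from A B.
have FF : Filter F.
  apply: filter_from_filter; first by exists a0.
  move=> a b Aa Ab; have [ab|ba] := Atot _ _ Aa Ab.
  - exists a => // y [Cy [_ -> ya]].
    by split; split=> //; [exists a | exists b => //; exact: le_trans ya ab].
  - exists b => // y [Cy [_ -> yb]].
    by split; split=> //; [exists a => //; exact: le_trans yb ba | exists b].
have PF : ProperFilter F.
  by apply: filter_from_proper => // a Aa; exists a; split; [exact: AC | exists a].
have [p [_ clp]] := compactT F PF (ex_intro2 _ _ a0 Aa0 (fun _ _ => I)).
have Bp a : A a -> B a p.
  move: clp; rewrite clusterE => clp Aa.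
  by rewrite (closure_id (B a)).1 //; apply: clp; exists a.
by exists p => [|a /Bp [_ [_ -> //]]]; case: (Bp _ Aa0).
Qed.

Lemma minimal_below {C : set X} {x : X} : closed C -> C x ->
  exists2 m, minimals le C m & le m x.
Proof.
move=> Ccl Cx; pose T := {y : X | C y /\ le y x}.
pose R : rel T := fun s t => `[< le (sval t) (sval s) >].
have [t tmax] : exists t : T, forall s, R t s -> s = t.
  apply: Zorn.
  - by move=> t; apply/asboolP.
  - by move=> r s t /asboolP rs /asboolP st; apply/asboolP; exact: le_trans st rs.
  - by move=> [s ?] [t ?] /asboolP st /asboolP ts; apply: eq_exist; exact: le_anti.
  - move=> A Atot; have [[s0 As0]|A0] := pselect (A !=set0); last first.
      by exists (exist _ x (conj Cx (le_refl x))) => s As; exfalso; apply: A0; exists s.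
    have [|||p Cp pA] := @chain_lower_bound C (sval @` A) Ccl.
    - by exists (sval s0), s0.
    - by move=> _ [s _ <-]; case: (svalP s).
    - move=> _ _ [s As <-] [t At <-].
      by case: (Atot _ _ As At) => /asboolP; [right | left].
    have px : le p x by apply: le_trans (pA _ (imageP _ As0)) (svalP s0).2.
    by exists (exist _ p (conj Cp px)) => s As; apply/asboolP; apply/pA/imageP.
case: t tmax => m [Cm mx] mmax; exists m => //; split=> // z Cz zm.
have zx : le z x by exact: le_trans zm mx.
by have /(congr1 sval) := mmax (exist _ z (conj Cz zx)) (asboolT zm).
Qed.

Lemma clop_scott_up_way_below V U : clop_scott_up le V -> V `<=` U ->
  way_below le V U.
Proof.
move=> [[_ Vcl] [_ uV minV]] VU W oW uW UW x Vx.
have [m Vm mx] := minimal_below Vcl Vx.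
have [downm_open _] := minV _ Vm.
have downm_m : downset_of le [set m] m by exists m.
have downm_nbhs := open_nbhs_nbhs (conj downm_open downm_m).
have [w [Ww [_ -> wm]]] := UW m (VU _ Vm.1) _ downm_nbhs.
exact: uW (uW _ _ Ww wm) mx.
Qed.

Lemma core_sub_ker U : core le U `<=` ker le U.
Proof.
move=> x [V [[cV sV] VU] Vx]; exists V => //; split.
  by split=> //; case: sV.
exact: clop_scott_up_way_below.
Qed.
End Priestley.

Section Algebraic.
Context {X : topologicalType} {le : X -> X -> Prop}.
Hypothesis alg : algebraic_L_space le.

Let pri : priestley le. Proof. by case: alg => [[]]. Qed.

Lemma ker_eq_core {U : set X} : clop_up le U -> ker le U = core le U.
Proof.
move=> cU; apply/seteqP; split; last exact: core_sub_ker.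
move=> x [V [_ VU] Vx]; apply: (VU (core le U)) => //.
- by apply: bigcup_open => W [[[oW _] _] _].
- move=> a b [W [[cW sW] WU] Wa] ab; exists W; first by split.
  by case: sW => _ uW _; exact: uW Wa ab.
- exact: alg.2.
Qed.

Lemma algebraic_continuous_L_space : continuous_L_space le.
Proof. by split=> [|U cU]; [case: alg | rewrite ker_eq_core //; exact: alg.2]. Qed.

End Algebraic.

Lemma L_morphism_preimage_clop_up {X1 X2 : topologicalType}
    {le1 : X1 -> X1 -> Prop} {le2 : X2 -> X2 -> Prop} {f : X1 -> X2} {U : set X2} :
  L_morphism le1 le2 f -> clop_up le2 U -> clop_up le1 (f @^-1` U).
Proof.
case=> fc fmono _ [[oU clU] uU]; split; last by move=> a b Ua /fmono; exact: uU.
by split; [move/continuousP: fc; apply | move/continuous_closedP: fc; apply].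
Qed.

Theorem theorem4p8 :
  (forall (X : topologicalType) (le : X -> X -> Prop),
      algebraic_L_space le -> continuous_L_space le) /\
  (forall (X1 X2 : topologicalType) (le1 : X1 -> X1 -> Prop)
          (le2 : X2 -> X2 -> Prop) (f : X1 -> X2),
      algebraic_L_space le1 -> algebraic_L_space le2 ->
      (coherent_L_morphism le1 le2 f <-> proper_L_morphism le1 le2 f)).
Proof.
split=> [X le|X1 X2 le1 le2 f alg1 alg2]; first exact: algebraic_continuous_L_space.
split=> -[Lf pres]; split=> // U cU;
  have cU1 := L_morphism_preimage_clop_up Lf cU.
- by rewrite (ker_eq_core alg2 cU) (ker_eq_core alg1 cU1); exact: pres.
- by rewrite -(ker_eq_core alg2 cU) -(ker_eq_core alg1 cU1); exact: pres.
Qed.
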